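(* Let $k\geq2$, $n$, $r$ be positive integers with $r<\frac{(k-1)n}{k}$. Let $\sigma$ be a cyclic order on $[n]$, and let $\mathcal{F}$ be a $k$-wise intersecting family of $\sigma$-intervals of length $r$. If $|\mathcal{F}|=r$, then there is a point $x$ such that $\mathcal{F}$ consists of all $\sigma$-intervals of length $r$ containing $x$.
   Context: A cyclic order on $[n]$ is a permutation $\sigma=(\sigma(1),\dots,\sigma(n))$ of $[n]$ considered up to cyclic rotation. For $x\in[n]$, the $\sigma$-interval of length $r$ starting at $x$ is $\{\sigma(x),\sigma(x+1),\dots,\sigma(x+r-1)\}$, with indices taken modulo $n$ (in $[n]$). A family $\mathcal{F}$ is $k$-wise intersecting if $F_1\cap\cdots\cap F_k\neq\emptyset$ for all $F_1,\dots,F_k\in\mathcal{F}$. *)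

From mathcomp Require Import all_boot all_fingroup.
Set Implicit Arguments. Unset Strict Implicit. Unset Printing Implicit Defensive.

(* A cyclic order on [n] = 'I_n is represented by a permutation sigma;
   positions are 'I_n, and sigma maps position i to the element sigma(i). *)
Definition sigma_interval (n : nat) (sigma : {perm 'I_n}) (x : 'I_n) (r : nat)
  : {set 'I_n} :=
  [set sigma j | j : 'I_n & ((j + n - x) %% n < r)%N].

Definition is_sigma_interval (n : nat) (sigma : {perm 'I_n}) (r : nat)
  (A : {set 'I_n}) : bool :=
  [exists x : 'I_n, A == sigma_interval sigma x r].

(* k-wise intersecting: any k members (repetitions allowed) have a common point. *)
Definition kwise_intersecting (T : finType) (k : nat) (F : {set {set T}}) : Prop :=
  forall f : 'I_k -> {set T}, (forall i, f i \in F) -> \bigcap_(i < k) f i != set0.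

From mathcomp Require Import all_boot all_fingroup zify.
Set Implicit Arguments. Unset Strict Implicit. Unset Printing Implicit Defensive.

(* Let S be the set of starting positions of the intervals of F, so #|S| = r
   and its complement has m = n - r < n elements, with n < k m.  A point lies
   outside the interval starting at s iff s is among the m positions just
   after it, so k-wise intersection says that no k points of S meet every
   window of m consecutive positions.  Measured from any a in S, a chain
   a, a + c, a + c + m, a + c + 2m, ... (0 < c <= m) meets every window with
   at most k points, hence leaves S: the complement meets every residue class
   mod m, and, having m elements, meets it exactly once.  For a at the start of
   a run of S this forces a - 1, ..., a - m outside S (if m | n a similar chain
   through the class of a - 1 would lie in S, otherwise the run just before a
   would take some residue class twice), so S = {a, ..., a + r - 1} and every
   interval of F contains a + r - 1. *)

Section CyclicArithmetic.
Variable n : nat.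
Implicit Types a p : 'I_n.

Lemma ord_size_gt0 a : 0 < n.
Proof. exact: leq_ltn_trans (leq0n a) (ltn_ord a). Qed.

Definition cdist a p : nat := if a <= p then p - a else p + n - a.

Definition cshift a (d : nat) : 'I_n := Ordinal (ltn_pmod (a + d) (ord_size_gt0 a)).

Lemma cdist_lt a p : cdist a p < n.
Proof. by rewrite /cdist; have := ltn_ord a; have := ltn_ord p; case: ifP; lia. Qed.

Lemma cdistnn a : cdist a a = 0.
Proof. by rewrite /cdist leqnn subnn. Qed.

Lemma modn_lt_double x : x < n + n -> x %% n = if x < n then x else x - n.
Proof.
case: (ltnP x n) => [lt_xn _|ge_xn lt_x2n]; first exact: modn_small.
rewrite -{1}(subnK ge_xn).
by rewrite modnDr modn_small; lia.
Qed.

Lemma cdistE a p : (p + n - a) %% n = cdist a p.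
Proof.
have := ltn_ord a; have := ltn_ord p => lt_pn lt_an.
by rewrite modn_lt_double /cdist; [case: ifP; case: ifP; lia | lia].
Qed.

Lemma val_cshift a d : d < n -> val (cshift a d) = if a + d < n then a + d else a + d - n.
Proof. by move=> lt_dn; rewrite /= modn_lt_double //; have := ltn_ord a; lia. Qed.

Lemma cdist_cshift a d : d < n -> cdist a (cshift a d) = d.
Proof.
move=> lt_dn; rewrite /cdist val_cshift //; have := ltn_ord a.
by case: (ltnP (a + d) n); case: ifP; lia.
Qed.

Lemma cshiftK a p : cshift a (cdist a p) = p.
Proof.
apply: ord_inj; rewrite val_cshift ?cdist_lt // /cdist.
by have := ltn_ord a; have := ltn_ord p; case: (leqP a p); case: ifP; lia.
Qed.

Lemma cshiftD a x y : cshift (cshift a x) y = cshift a (x + y).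
Proof. by apply: val_inj; rewrite /= modnDml addnA. Qed.

Lemma cshiftDn a d : cshift a (d + n) = cshift a d.
Proof. by apply: val_inj; rewrite /= addnA modnDr. Qed.

Lemma cshiftn a : cshift a n = a.
Proof. by apply: val_inj; rewrite /= modnDr modn_small. Qed.

Lemma cshift0 a : cshift a 0 = a.
Proof. by apply: val_inj; rewrite /= addn0 modn_small. Qed.

Lemma cdist_rebase a y p :
  cdist y p = if cdist a y <= cdist a p then cdist a p - cdist a y
              else cdist a p + n - cdist a y.
Proof.
rewrite /cdist; have := ltn_ord a; have := ltn_ord y; have := ltn_ord p.
by case: (leqP a y); case: (leqP a p); case: (leqP y p); case: ifP; lia.
Qed.

Lemma cdistC a p : a != p -> cdist a p + cdist p a = n.
Proof.
move=> /eqP ne_ap; have {}ne_ap : nat_of_ord a <> p by move/val_inj.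
rewrite /cdist; have := ltn_ord a; have := ltn_ord p.
by case: (leqP a p); case: (leqP p a); lia.
Qed.

Lemma cdist_last_lt a s r : 0 < r <= n ->
  (cdist s (cshift a r.-1) < r) = (cdist a s < r).
Proof.
move=> r_bounds; rewrite (cdist_rebase a) cdist_cshift; last lia.
by have := cdist_lt a s; case: ifP; lia.
Qed.

Lemma mem_sigma_interval (sigma : {perm 'I_n}) x r p :
  (sigma p \in sigma_interval sigma x r) = (cdist x p < r).
Proof. by rewrite mem_imset ?inE ?cdistE //; exact: perm_inj. Qed.

Lemma sigma_interval_inj (sigma : {perm 'I_n}) r : 0 < r < n ->
  injective (fun x => sigma_interval sigma x r).
Proof.
move=> /andP [r_gt0 lt_rn] x y /= eq_xy.
have: cdist y x < r by rewrite -(mem_sigma_interval sigma) -eq_xy mem_sigma_interval cdistnn.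
have: r <= cdist y (cshift x (n - 1)).
  by rewrite leqNgt -(mem_sigma_interval sigma) -eq_xy mem_sigma_interval cdist_cshift; lia.
rewrite (cdist_rebase x) cdist_cshift; last lia.
case: (eqVneq y x) => // ne_yx; have := cdistC ne_yx; have := cdist_lt x y.
by case: ifP; lia.
Qed.

End CyclicArithmetic.

Definition meets_all_windows (n k m : nat) (g : 'I_k -> 'I_n) : Prop :=
  forall y, exists i, 0 < cdist y (g i) <= m.

Lemma chain_meets_all_windows n k m (a : 'I_n) (f : nat -> nat) t :
    m < n -> t < k -> (forall i, i < t -> f i <= f i.+1 <= f i + m) ->
    f t < n -> n + f 0 <= f t + m ->
  meets_all_windows m (fun i : 'I_k => cshift a (f (minn i t))).
Proof.
move=> lt_mn lt_tk step lt_ftn wrap y.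
have mono i : i <= t -> f i <= f t.
  move=> le_it; suff: forall d, d + i <= t -> f i <= f (d + i).
    by move/(_ (t - i)); rewrite subnK //; apply.
  elim=> // d IH le_dit; have /andP [le_f _] := step (d + i) le_dit.
  exact: leq_trans (IH (ltnW le_dit)) le_f.
have f_lt_n i : i <= t -> f i < n.
  by move=> le_it; apply: leq_ltn_trans (mono _ le_it) lt_ftn.
have dist_y i : i <= t -> cdist y (cshift a (f i)) =
    if cdist a y <= f i then f i - cdist a y else f i + n - cdist a y.
  by move=> le_it; rewrite (cdist_rebase a) cdist_cshift ?f_lt_n.
have lt_ay := cdist_lt a y; set u := cdist a y in dist_y lt_ay.
have f0_le := mono 0 (leq0n t).
have lt_0k : 0 < k by lia.
case: (ltnP u (f 0)) => [lt_u0|le_0u]; last case: (ltnP u (f t)) => [lt_ut|le_tu].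
- by exists (Ordinal lt_0k); rewrite /= min0n dist_y //; case: ifP; lia.
- have exj : exists j, u < f j by exists t.
  case: (ex_minnP exj) => j lt_uj min_j.
  have le_jt : j <= t by apply: min_j.
  have j_gt0 : 0 < j by case: j lt_uj {min_j le_jt} => //; lia.
  have le_prev : f j.-1 <= u by rewrite leqNgt; apply/negP => /min_j; lia.
  have /andP [_ gap] : f j.-1 <= f j.-1.+1 <= f j.-1 + m by apply: step; lia.
  exists (Ordinal (leq_ltn_trans le_jt lt_tk)); rewrite /= (minn_idPl le_jt) dist_y //.
  by move: gap; rewrite prednK //; case: ifP; lia.
- by exists (Ordinal lt_0k); rewrite /= min0n dist_y //; case: ifP; lia.
Qed.

Section SparseComplement.
Variables (n k m : nat) (S : {set 'I_n}).
Hypotheses (m_gt0 : 0 < m) (lt_mn : m < n) (lt_n_km : n < k * m).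
Hypothesis card_compl : #|~: S| = m.
Hypothesis no_cover :
  forall g : 'I_k -> 'I_n, (forall i, g i \in S) -> ~ meets_all_windows m g.

Lemma chain_leaves_S (a : 'I_n) (f : nat -> nat) t :
    t < k -> (forall i, i < t -> f i <= f i.+1 <= f i + m) ->
    f t < n -> n + f 0 <= f t + m ->
  exists2 i, i <= t & cshift a (f i) \notin S.
Proof.
move=> lt_tk step lt_ftn wrap.
case: (boolP [forall i : 'I_t.+1, cshift a (f i) \in S]) => [/forallP all_in|/forallPn [i]].
  case: (no_cover _ (chain_meets_all_windows a lt_mn lt_tk step lt_ftn wrap)) => i.
  have lt_it : minn i t < t.+1 by rewrite ltnS geq_minr.
  exact: all_in (Ordinal lt_it).
by exists i; first exact: ltn_ord i.
Qed.

Lemma complement_meets_progression (a : 'I_n) c : a \in S -> 0 < c <= m ->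
  exists i, (c + i * m < n) && (cshift a (c + i * m) \notin S).
Proof.
move=> aS /andP [c_gt0 le_cm].
have k_gt0 : 0 < k by rewrite lt0n; apply: contraTneq lt_n_km => ->.
case: (ltnP (c + k.-1 * m) n) => [fits | overflows].
  have step i : i < k.-1 -> c + i * m <= c + i.+1 * m <= c + i * m + m by rewrite mulSn; lia.
  have lt_k1k : k.-1 < k by lia.
  have wrap : n + (c + 0 * m) <= c + k.-1 * m + m by nia.
  have [i le_ik notS] := chain_leaves_S a lt_k1k step fits wrap.
  exists i; rewrite notS andbT; apply: leq_ltn_trans fits.
  by rewrite leq_add2l leq_mul2r le_ik orbT.
pose q := (n - c.+1) %/ m.
have q_le : q * m <= n - c.+1 := leq_divM _ _.
have q_gt : n - c.+1 < q.+1 * m := ltn_ceil _ m_gt0.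
pose f i := if i is i'.+1 then c + i' * m else 0.
have step i : i < q.+1 -> f i <= f i.+1 <= f i + m by case: i => [|i] _ /=; rewrite ?mulSn; lia.
have lt_qk : q.+1 < k by nia.
have lt_fn : f q.+1 < n by rewrite /f; nia.
have wrap : n + f 0 <= f q.+1 + m by rewrite /f; nia.
have [[|i] le_iq notS] := chain_leaves_S a lt_qk step lt_fn wrap.
  by rewrite cshift0 aS in notS.
by exists i; rewrite notS andbT; nia.
Qed.

Lemma complement_meets_class (a : 'I_n) j : a \in S ->
  exists2 z, z \notin S & cdist a z = j %[mod m].
Proof.
move=> aS; pose c := if j %% m == 0 then m else j %% m.
have c_bounds : 0 < c <= m by rewrite /c; case: eqP; have := ltn_pmod j m_gt0; lia.
have [i /andP [lt_n notS]] := complement_meets_progression aS c_bounds.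
exists (cshift a (c + i * m)); rewrite // cdist_cshift // addnC modnMDl /c.
by case: eqP => [->|_]; rewrite ?modnn ?modn_mod.
Qed.

Lemma complement_class_inj (a z1 z2 : 'I_n) : a \in S -> z1 \notin S -> z2 \notin S ->
  cdist a z1 = cdist a z2 %[mod m] -> z1 = z2.
Proof.
move=> aS; pose cls z : 'I_m := Ordinal (ltn_pmod (cdist a z) m_gt0).
have onto : cls @: (~: S) = [set: 'I_m].
  apply/setP => j; rewrite inE; apply/imsetP.
  have [z notS ez] := complement_meets_class j aS.
  by exists z; rewrite ?inE //; apply: val_inj; rewrite /= ez modn_small.
have /imset_injP cls_inj : #|cls @: (~: S)| == #|~: S|.
  by rewrite onto cardsT card_ord card_compl.
by move=> z1S z2S e; apply: cls_inj; rewrite ?inE //; apply: val_inj.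
Qed.

Lemma exists_run_start : exists2 a, a \in S & cshift a (n - 1) \notin S.
Proof.
have /card_gt0P [z] : 0 < #|~: S| by rewrite card_compl.
have /card_gt0P [s sS] : 0 < #|S| by move: (cardsC S); rewrite card_ord card_compl; lia.
rewrite inE => notS.
apply/exists_inP; apply: contraNT notS => /exists_inPn pred_closed.
have down d : cshift z d \in S -> z \in S.
  elim: d => [|d IH]; first by rewrite cshift0.
  move=> /pred_closed; rewrite negbK cshiftD.
  have -> : d.+1 + (n - 1) = d + n by lia.
  by rewrite cshiftDn.
by apply: (down (cdist z s)); rewrite cshiftK.
Qed.

Lemma gap_before_run_dvd (a : 'I_n) D : m %| n -> a \in S ->
  cshift a (n - 1) \notin S -> 0 < D <= m -> cshift a (n - D) \notin S.
Proof.
move=> /dvdnP [q n_eq] aS start_notS /andP [D_gt0 le_Dm]; apply/negP => bS.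
have q_gt1 : 1 < q by nia.
have lt_qk : q < k by nia.
pose f i := if i == 0 then 0 else if i < q then i * m - 1 else n - D.
have step i : i < q -> f i <= f i.+1 <= f i + m.
  move=> lt_iq; rewrite /f /= lt_iq; case: (ltnP i.+1 q) => ?; case: eqP => ?; nia.
have lt_fn : f q < n by rewrite /f /= ltnn; case: eqP; lia.
have wrap : n + f 0 <= f q + m by rewrite /f /= ltnn; case: eqP; lia.
have [i le_iq] := chain_leaves_S a lt_qk step lt_fn wrap.
rewrite /f; case: eqP => [_|ne_i0]; first by rewrite cshift0 aS.
case: ltnP => [lt_iq notS|le_qi]; last by rewrite bS.
have im_gt0 : 0 < i * m by rewrite muln_gt0 m_gt0 andbT lt0n; apply/eqP.
have lt_im_qm : i * m < q * m by rewrite ltn_pmul2r.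
have cls : cdist a (cshift a (i * m - 1)) = cdist a (cshift a (n - 1)) %[mod m].
  rewrite !cdist_cshift n_eq; [|lia|lia].
  by apply/eqP; rewrite -(eqn_modDr 1) !subnK ?modnMl //; lia.
move/(congr1 (cdist a)): (complement_class_inj aS notS start_notS cls).
by rewrite !cdist_cshift; lia.
Qed.

Lemma gap_before_run_ndvd (a : 'I_n) D : ~~ (m %| n) -> a \in S ->
    (forall d, 0 < d < D -> cshift a (n - d) \notin S) -> 1 < D <= m ->
  cshift a (n - D) \notin S.
Proof.
move=> ndvd aS before /andP [D_gt1 le_Dm]; apply/negP => bS.
set b := cshift a (n - D) in bS.
have rho_gt0 : 0 < n %% m by rewrite lt0n.
have lt_rho_m : n %% m < m := ltn_pmod n m_gt0.
move: (divn_eq n m) rho_gt0 lt_rho_m; move: (n %/ m) (n %% m) => q rho n_eq rho_gt0 lt_rho_m.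
(* Seen from a, u = a - d0 has class e; seen from b = a - D, the class e + D
   misses the run b + 1, ..., a - 1, so its complement point w lies past a and
   has class e seen from a too. *)
set d0 := minn rho (D - 1); set e := rho - d0.
have n_d0 : n - d0 = q * m + e by lia.
have le_eD_m : e + D <= m by lia.
have d0_gt0 : 0 < d0 by lia.
have u_notS : cshift a (n - d0) \notin S by apply: before; lia.
have a_eq : cshift b D = a by rewrite cshiftD subnK ?cshiftn //; lia.
have u_eq : cshift b (D - d0) = cshift a (n - d0) by rewrite cshiftD; congr cshift; lia.
have dist_ba : cdist b a = D by rewrite -a_eq cdist_cshift; lia.
have dist_bu : cdist b (cshift a (n - d0)) = D - d0 by rewrite -u_eq cdist_cshift; lia.
have [w w_notS w_cls] := complement_meets_class (e + D) bS.
set x := cdist b w in w_cls.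
have w_eq : cshift b x = w := cshiftK b w.
have lt_Dx : D < x.
  case: (ltngtP x D) => [lt_xD|//|eq_xD]; last by rewrite -w_eq eq_xD a_eq aS in w_notS.
  move: w_cls; rewrite (modn_small (_ : x < m)); last lia.
  case: (ltngtP (e + D) m) => [lt_eDm|?|eq_eDm]; [rewrite modn_small //; lia | lia |].
  by rewrite eq_eDm modnn => x0; rewrite -w_eq x0 cshift0 bS in w_notS.
have dist_aw : cdist a w = x - D by rewrite (cdist_rebase b) dist_ba ifT ?(ltnW lt_Dx).
have cls_aw : cdist a w = e %[mod m].
  by apply/eqP; rewrite -(eqn_modDr D) dist_aw subnK ?(ltnW lt_Dx) // w_cls.
have cls_au : cdist a (cshift a (n - d0)) = e %[mod m].
  by rewrite cdist_cshift ?n_d0 ?modnMDl // -n_d0 ltn_subrL d0_gt0 (ltn_trans m_gt0 lt_mn).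
have := complement_class_inj aS u_notS w_notS (etrans cls_au (esym cls_aw)).
move/(congr1 (cdist b)); rewrite dist_bu; clear -lt_Dx; lia.
Qed.

Lemma gap_before_run (a : 'I_n) : a \in S -> cshift a (n - 1) \notin S ->
  forall d, 0 < d <= m -> cshift a (n - d) \notin S.
Proof.
move=> aS start_notS; elim/ltn_ind => D IH D_bounds.
have [dvd_mn | ndvd_mn] := boolP (m %| n); first exact: gap_before_run_dvd.
case: (ltngtP D 1) => [|D_gt1|->] //; first lia.
apply: gap_before_run_ndvd => [//|//|d d_bounds|]; last lia.
by apply: IH; lia.
Qed.

Lemma complement_is_block : exists a : 'I_n, S = [set p | cdist a p < n - m].
Proof.
have [a aS start_notS] := exists_run_start.
exists a; apply/eqP; rewrite eqEcard; apply/andP; split.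
  apply/subsetP => p pS; rewrite inE ltnNge; apply: contraL pS => le_p.
  rewrite -(cshiftK a p) (_ : cdist a p = n - (n - cdist a p)).
    by apply: gap_before_run; have := cdist_lt a p; lia.
  by have := cdist_lt a p; lia.
have card_S : #|S| = n - m by move: (cardsC S); rewrite card_ord card_compl; lia.
have card_img : #|[set cshift a i | i : 'I_(n - m)]| <= n - m.
  by rewrite (leq_trans (leq_imset_card _ _)) // card_ord.
rewrite card_S (leq_trans _ card_img) // subset_leq_card //.
apply/subsetP => p; rewrite inE => lt_p.
by apply/imsetP; exists (Ordinal lt_p); rewrite ?inE ?cshiftK.
Qed.
End SparseComplement.

Lemma kwise_no_window_cover n k r (sigma : {perm 'I_n}) (F : {set {set 'I_n}})
    (g : 'I_k -> 'I_n) :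
  kwise_intersecting k F -> (forall i, sigma_interval sigma (g i) r \in F) ->
  ~ meets_all_windows (n - r) g.
Proof.
move=> F_kwise gF g_cover; have /set0Pn [v /bigcapP v_common] := F_kwise _ gF.
have [i /andP [dist_gt0 dist_le]] := g_cover (sigma^-1 v)%g.
have := v_common i isT; rewrite -{1}(permKV sigma v) mem_sigma_interval.
have ne_gi : g i != (sigma^-1 v)%g by apply: contraTneq dist_gt0 => ->; rewrite cdistnn.
by have := cdistC ne_gi; lia.
Qed.

Lemma intervals_of_starts n r (sigma : {perm 'I_n}) (F : {set {set 'I_n}}) :
  (forall A, A \in F -> is_sigma_interval sigma r A) ->
  F = [set sigma_interval sigma s r | s in [set s | sigma_interval sigma s r \in F]].
Proof.
move=> F_intervals; apply/setP => A; apply/idP/imsetP => [AF | [s] /[!inE] sF -> //].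
by have /existsP [s /eqP A_eq] := F_intervals A AF; exists s; rewrite ?inE -A_eq.
Qed.

Unset Implicit Arguments.
Theorem lemma2p2 (k n r : nat) (sigma : {perm 'I_n}) (F : {set {set 'I_n}}) :
  (2 <= k)%N -> (0 < n)%N -> (0 < r)%N -> (k * r < (k - 1) * n)%N ->
  (forall A, A \in F -> is_sigma_interval sigma r A) ->
  kwise_intersecting k F ->
  #|F| = r ->
  exists x : 'I_n,
    F = [set A : {set 'I_n} | is_sigma_interval sigma r A && (x \in A)].
Proof.
move=> k_ge2 n_gt0 r_gt0 lt_kr_kn F_intervals F_kwise card_F.
have lt_rn : r < n by nia.
set S := [set s | sigma_interval sigma s r \in F].
have F_eq : F = [set sigma_interval sigma s r | s in S] := intervals_of_starts F_intervals.
have card_S : #|S| = r.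
  by rewrite -card_F F_eq card_in_imset // => x y _ _; apply: sigma_interval_inj; lia.
have [a S_eq] : exists a : 'I_n, S = [set p | cdist a p < n - (n - r)].
  apply: (@complement_is_block n k); [lia | lia | nia | | ].
    by apply: (@addnI r); rewrite subnKC ?(ltnW lt_rn) // -{1}card_S cardsC card_ord.
  move=> g gS; apply: (kwise_no_window_cover (sigma := sigma) (F := F)) => // i.
  by have := gS i; rewrite inE.
rewrite subKn ?(ltnW lt_rn) // in S_eq.
have r_bounds : 0 < r <= n by rewrite r_gt0 ltnW.
exists (sigma (cshift a r.-1)); apply/setP => A; rewrite inE F_eq.
apply/imsetP/andP => [[s sS ->] | [/existsP [s /eqP ->] last_in]].
  move: sS; rewrite S_eq inE => s_near; split; first by apply/existsP; exists s.
  by rewrite mem_sigma_interval cdist_last_lt.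
by exists s; rewrite // S_eq inE -(cdist_last_lt _ _ r_bounds) -(mem_sigma_interval sigma).
Qed.
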